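(* Let $V$ and $W$ be real inner product spaces of dimension $2$ and $3$ respectively, let $A:[0,1]\to\mathrm{Hom}(W,W)$ be a smooth path of positive self-adjoint operators and let $T:[0,1]\to\mathrm{Hom}(V,W)$ be a smooth path with $\ddot T(s)=A(s)\circ T(s)$. Then $u(s):=\|T(s)\|_1$ is convex on $[0,1]$. Moreover, if $T(s)$ has rank $2$ and $A(s)\circ T(s)\neq0$, then $\ddot u(s)>0$.
   Context: For $L\in\mathrm{Hom}(V,W)$, $\|L\|_1=\operatorname{tr}\sqrt{L^TL}$ ($1$-Schatten norm), with $L^T$ the adjoint. *)

(* V = R^2, W = R^3 with the standard inner product;
   Hom(V,W) = 3x2 real matrices, adjoint = transpose. *)
From HB Require Import structures.
From mathcomp Require Import all_boot all_order all_algebra.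
From mathcomp Require Import all_classical all_reals all_analysis.
Set Implicit Arguments. Unset Strict Implicit. Unset Printing Implicit Defensive.
Import Order.TTheory GRing.Theory Num.Theory.
Local Open Scope ring_scope.
Local Open Scope classical_set_scope.

Definition psd_mx (R : realType) (n : nat) (S : 'M[R]_n) : Prop :=
  S^T = S /\ forall v : 'cV[R]_n, 0 <= (v^T *m S *m v) 0 0.

Definition sqrt_mx (R : realType) (n : nat) (M : 'M[R]_n) : 'M[R]_n :=
  xget 0 [set S : 'M[R]_n | psd_mx S /\ S *m S = M].

Definition schatten1 (R : realType) (m n : nat) (L : 'M[R]_(m, n)) : R :=
  \tr (sqrt_mx (L^T *m L)).

Definition smooth_fun (R : realType) (f : R -> R) : Prop :=
  forall (k : nat) (x : R), derivable (iter k (@derive1 R R) f) x 1.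

Definition convex_on (R : realType) (a b : R) (u : R -> R) : Prop :=
  forall x y t : R, a <= x <= b -> a <= y <= b -> 0 <= t <= 1 ->
    u ((1 - t) * x + t * y) <= (1 - t) * u x + t * u y.

(* For a 3 x 2 matrix L with Gram matrix G = L^T L one has
   ||L||_1 = tr sqrt(G) = sqrt(tr G + 2 sqrt(det G)) >= <P, L> = tr (P^T L) for every
   P with orthonormal columns (by Bessel's inequality and Binet-Cauchy), with equality
   for the polar factor P = L G^(-1/2) when det G > 0.  Freezing this P at time t,
   s |-> <P, T s> is a smooth minorant of u touching it at t, hence
   u''(t) >= <P, T''(t)> = tr (G^(-1/2) T^T A T) >= 0, strictly when A T <> 0.
   Where det G = 0, u touches from above the Frobenius norm ||T||_2 = sqrt(tr G),
   which is locally convex by the same argument with P = T / ||T||_2.  So u has a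
   supporting line at every interior point, and being continuous it is convex. *)

From HB Require Import structures.
From mathcomp Require Import all_boot all_order all_algebra.
From mathcomp Require Import all_classical all_reals all_analysis.
From mathcomp Require Import ring lra.
Import Order.TTheory GRing.Theory Num.Theory.
Import numFieldNormedType.Exports.
Local Open Scope ring_scope.
Local Open Scope classical_set_scope.

Set Implicit Arguments.
Unset Strict Implicit.
Unset Printing Implicit Defensive.

Section SecondDerivative.
Context {R : realType}.
Implicit Types (f g h k : R -> R) (a b c t x : R).

Lemma is_derive1_derive1 f x : derivable f x 1 -> is_derive x 1 f (derive1 f x).
Proof. by rewrite derive1E; exact: derivableP. Qed.

(* Pointwise forms of the library rules, which are stated with the function-ring
   operations f + g, f - g and f * g. *)
Lemma is_derive1D f g x a b : is_derive x 1 f a -> is_derive x 1 g b ->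
  is_derive x 1 (fun y => f y + g y) (a + b).
Proof. by move=> fa gb; have := is_deriveD fa gb; rewrite -[f + g]/(fun y => f y + g y). Qed.

Lemma is_derive1B f g x a b : is_derive x 1 f a -> is_derive x 1 g b ->
  is_derive x 1 (fun y => f y - g y) (a - b).
Proof. by move=> fa gb; have := is_deriveB fa gb; rewrite -[f - g]/(fun y => f y - g y). Qed.

Lemma is_derive1M f g x a b : is_derive x 1 f a -> is_derive x 1 g b ->
  is_derive x 1 (fun y => f y * g y) (a * g x + f x * b).
Proof.
move=> fa gb; have := is_deriveM fa gb; rewrite -[f * g]/(fun y => f y * g y).
by rewrite addrC [a * _]mulrC.
Qed.

Lemma is_derive1_sqrt_comp f x a : 0 < f x -> is_derive x 1 f a ->
  is_derive x 1 (fun y => Num.sqrt (f y)) ((2 * Num.sqrt (f x))^-1 * a).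
Proof. by move=> fx0 fa; exact: (is_derive1_comp (is_derive1_sqrt fx0) fa). Qed.

Definition derivable2 f t :=
  (\forall x \near t, derivable f x 1) /\ derivable (derive1 f) t 1.

Lemma derivable2_near_derive h k t d :
  (\forall x \near t, is_derive (x : R) 1 h (k x)) -> is_derive t 1 k d ->
  derivable2 h t /\ derive1 (derive1 h) t = d.
Proof.
move=> hk [dk kd]; have kE : {near t, k =1 derive1 h}.
  by apply: filterS hk => x hx; rewrite derive1E derive_val.
split; first split.
- by apply: filterS hk => x [].
- exact: near_eq_derivable kE dk.
- by rewrite derive1E -kd; apply: near_eq_derive; apply: filterS kE.
Qed.

Lemma derivable2_continuous f t : derivable2 f t -> {for t, continuous f}.
Proof. by case=> /nbhs_singleton /derivable1_diffP /differentiable_continuous. Qed.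

Lemma smooth_derivable2 f : smooth_fun f -> forall t, derivable2 f t.
Proof.
by move=> sf t; split; [apply: filterE => x; exact: (sf 0%N) | exact: (sf 1%N)].
Qed.

Lemma derivable2_cst c t : derivable2 (fun=> c) t.
Proof.
have dc : \forall x \near t, is_derive (x : R) 1 (fun=> c) ((fun=> 0) x).
  by apply: filterE => x; exact: is_derive_cst.
exact: (derivable2_near_derive dc (is_derive_cst _ _ _)).1.
Qed.

Lemma derivable2D f g t : derivable2 f t -> derivable2 g t ->
  derivable2 (fun x => f x + g x) t.
Proof.
move=> [df d2f] [dg d2g].
have d2fg := is_derive1D (is_derive1_derive1 d2f) (is_derive1_derive1 d2g).
have dfg : \forall x \near t, is_derive (x : R) 1 (fun x => f x + g x) (derive1 f x + derive1 g x).
  apply: filterS2 df dg => x dfx dgx.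
  exact: is_derive1D (is_derive1_derive1 dfx) (is_derive1_derive1 dgx).
exact: (derivable2_near_derive dfg d2fg).1.
Qed.

Lemma derive2B f g t : derivable2 f t -> derivable2 g t ->
  derivable2 (fun x => f x - g x) t /\
  derive1 (derive1 (fun x => f x - g x)) t = derive1 (derive1 f) t - derive1 (derive1 g) t.
Proof.
move=> [df d2f] [dg d2g].
have d2fg := is_derive1B (is_derive1_derive1 d2f) (is_derive1_derive1 d2g).
have dfg : \forall x \near t, is_derive (x : R) 1 (fun x => f x - g x) (derive1 f x - derive1 g x).
  apply: filterS2 df dg => x dfx dgx.
  exact: is_derive1B (is_derive1_derive1 dfx) (is_derive1_derive1 dgx).
exact: derivable2_near_derive dfg d2fg.
Qed.

Lemma derivable2M f g t : derivable2 f t -> derivable2 g t ->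
  derivable2 (fun x => f x * g x) t.
Proof.
move=> [df d2f] [dg d2g].
have dft := is_derive1_derive1 (nbhs_singleton df).
have dgt := is_derive1_derive1 (nbhs_singleton dg).
have dfg : \forall x \near t, is_derive (x : R) 1 (fun x => f x * g x)
    (derive1 f x * g x + f x * derive1 g x).
  apply: filterS2 df dg => x dfx dgx.
  exact: is_derive1M (is_derive1_derive1 dfx) (is_derive1_derive1 dgx).
have d2fg := is_derive1D (is_derive1M (is_derive1_derive1 d2f) dgt)
                         (is_derive1M dft (is_derive1_derive1 d2g)).
exact: (derivable2_near_derive dfg d2fg).1.
Qed.

Lemma derivable2_sum n (F : 'I_n -> R -> R) t : (forall i, derivable2 (F i) t) ->
  derivable2 (fun x => \sum_(i < n) F i x) t.
Proof.
elim: n F => [|n IHn] F dF.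
  have -> : (fun x => \sum_(i < 0) F i x) = fun=> 0 by apply/funext => x; rewrite big_ord0.
  exact: derivable2_cst.
have -> : (fun x => \sum_(i < n.+1) F i x) =
    (fun x => \sum_(i < n) F (widen_ord (leqnSn n) i) x + F ord_max x).
  by apply/funext => x; rewrite big_ord_recr.
exact: derivable2D (IHn _ (fun i => dF _)) (dF _).
Qed.

Lemma derivable2_sqrt f t : derivable2 f t -> 0 < f t ->
  derivable2 (fun x => Num.sqrt (f x)) t.
Proof.
move=> d2f ft0; have [df d2f't] := d2f.
have dft := is_derive1_derive1 (nbhs_singleton df).
have /cvgr_gt/(_ _ ft0) fpos := derivable2_continuous d2f.
have dsq : \forall x \near t, is_derive (x : R) 1 (fun x => Num.sqrt (f x))
    ((2 * Num.sqrt (f x))^-1 * derive1 f x).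
  apply: filterS2 fpos df => x fx0 dfx.
  exact: is_derive1_sqrt_comp fx0 (is_derive1_derive1 dfx).
have d2sq : is_derive t 1 (fun x => 2 * Num.sqrt (f x)) _ :=
  is_derive1M (is_derive_cst (2 : R) t 1) (is_derive1_sqrt_comp ft0 dft).
have sq0 : 2 * Num.sqrt (f t) != 0 by rewrite mulf_neq0 // gt_eqF // sqrtr_gt0.
have dk := is_derive1M (is_deriveV (f := fun x => 2 * Num.sqrt (f x)) sq0 d2sq)
                       (is_derive1_derive1 d2f't).
exact: (derivable2_near_derive dsq dk).1.
Qed.

Lemma derive1_lt0_right g t : derivable g t 1 -> g t = 0 -> derive1 g t < 0 ->
  exists2 d, 0 < d & forall x, t < x < t + d -> g x < 0.
Proof.
move=> dg gt0; rewrite derive1E => g't.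
have dgE : (fun r : R => r^-1 *: ((g \o shift t) (r *: 1) - g t)) @ 0^' --> 'D_1 g t := dg.
move: dgE => /cvgr_lt /(_ _ g't) /nbhs_ballP[d /= d0]; rewrite ball_itv => Hd.
exists d => // x /andP[tx xd]; have xt0 : x - t != 0 by rewrite subr_eq0 gt_eqF.
have : `]0 - d, 0 + d[ (x - t) by rewrite /= in_itv /=; apply/andP; split; lra.
move=> /Hd /(_ xt0); rewrite /= gt0 subr0 /GRing.scale /= mulr1 subrK.
by rewrite pmulr_rlt0 // invr_gt0 subr_gt0.
Qed.

Lemma derive2_ge0_at_min h t : derivable2 h t -> (\forall x \near t, h t <= h x) ->
  0 <= derive1 (derive1 h) t.
Proof.
move=> [dh d2h] hmin.
have : \forall x \near t, derivable h x 1 /\ h t <= h x.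
  by apply: filterS2 dh hmin => x; split.
move=> /nbhs_ballP[e /= e0]; rewrite ball_itv => He.
have h't : derive1 h t = 0.
  rewrite derive1E; apply: derive_val.
  apply: (@derive1_at_min _ h (t - e) (t + e)) => [|y /He[]//||y /He[]//].
  - lra.
  - by rewrite in_itv /=; apply/andP; split; lra.
rewrite leNgt; apply/negP => /(derive1_lt0_right d2h h't)[d d0 h'lt0].
pose r := Num.min e d / 2.
have [r0 re rd] : [/\ 0 < r, r < e & r < d].
  have m0 : 0 < Num.min e d by rewrite lt_min e0 d0.
  have me : Num.min e d <= e by rewrite ge_min lexx.
  have md : Num.min e d <= d by rewrite ge_min lexx orbT.
  by rewrite /r; split; lra.
have dhr : {in `[t, t + r]%R, forall x, derivable h x 1}.
  move=> x; rewrite in_itv /= => /andP[tx xr].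
  by have /He[] : x \in `]t - e, t + e[%R by rewrite in_itv /=; apply/andP; split; lra.
have /He[_ htr] : t + r \in `]t - e, t + e[%R.
  by rewrite in_itv /=; apply/andP; split; lra.
suff : h (t + r) < h t by lra.
apply: (@ltr0_derive1_lt_cc _ h t (t + r)) => //.
- by move=> x; rewrite in_itv /= => /andP[tx xr]; apply: dhr; rewrite in_itv /= !ltW.
- by move=> x; rewrite in_itv /= => /andP[tx xr]; apply: h'lt0; apply/andP; split; lra.
- exact: derivable_within_continuous dhr.
- by rewrite in_itv /= lexx ltW //; lra.
- by rewrite in_itv /= lexx; lra.
- lra.
Qed.

Lemma derive2_le_contact f g t : derivable2 f t -> derivable2 g t ->
  (\forall x \near t, g x <= f x) -> g t = f t ->
  derive1 (derive1 g) t <= derive1 (derive1 f) t.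
Proof.
move=> df dg gf gft; have [dfg fg''] := derive2B df dg.
rewrite -subr_ge0 -fg''; apply: derive2_ge0_at_min dfg _.
by apply: filterS gf => x; rewrite gft subrr subr_ge0.
Qed.

Definition has_support_line (u : R -> R) (c : R) :=
  exists k : R, \forall t \near c, u c + k * (t - c) <= u t.

Lemma has_support_line_le f g c : (forall t, f t <= g t) -> f c = g c ->
  has_support_line f c -> has_support_line g c.
Proof.
move=> fg fgc [k fk]; exists k; apply: filterS fk => t.
by rewrite -fgc => /le_trans; apply.
Qed.

Lemma support_line_derive2_ge0 f c :
  (\forall t \near c, derivable2 f t /\ 0 <= derive1 (derive1 f) t) ->
  has_support_line f c.
Proof.
move=> /nbhs_ballP[e /= e0]; rewrite ball_itv => He.
have df : {in `]c - e, c + e[%R, forall x, derivable f x 1}.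
  by move=> x /He[[/nbhs_singleton]].
have f'_mono : {in `]c - e, c + e[%R &, {homo derive1 f : x y / x <= y}}.
  apply: ger0_derive1_le_oo => [x /He[[_ //]] | x /He[] // |].
  move=> x xI; have [[_ d2fx] _] := He x (set_mem xI).
  exact/differentiable_continuous/derivable1_diffP.
have mvt a b : c - e < a -> a <= b -> b < c + e ->
    exists2 x, x \in `]c - e, c + e[%R /\ a <= x <= b & f b - f a = derive1 f x * (b - a).
  move=> ca ab bc.
  have dab : {in `[a, b]%R, forall x, derivable f x 1}.
    move=> x; rewrite in_itv /= => /andP[ax xb].
    by apply: df; rewrite in_itv /=; apply/andP; split; lra.
  have [x + ->] := MVT_segment ab (fun x xI => is_derive1_derive1 (dab x (subset_itv_oo_cc xI)))
    (derivable_within_continuous dab).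
  rewrite in_itv /= => /andP[ax xb]; exists x => //.
  by rewrite in_itv /=; split => //; apply/andP; split; lra.
exists (derive1 f c); apply/nbhs_ballP; exists e => //; rewrite ball_itv => t.
rewrite /= in_itv /= => /andP[ct tc].
have cI : c \in `]c - e, c + e[%R by rewrite in_itv /=; apply/andP; split; lra.
have [le_ct|lt_tc] := leP c t.
- have [x [xI /andP[cx xt]] ft] := mvt c t ltac:(lra) le_ct tc.
  have := f'_mono c x cI xI cx.
  have : 0 <= t - c by lra.
  nra.
- have [x [xI /andP[tx xc]] ft] := mvt t c ct (ltW lt_tc) ltac:(lra).
  have := f'_mono x c xI cI xc.
  have : 0 <= c - t by lra.
  nra.
Qed.

Lemma support_line_quad_not_max (w : R -> R) c (k d : R) : 0 < d ->
  (\forall t \near c, w c + k * (t - c) + d * (t - c) ^+ 2 <= w t) ->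
  ~ (\forall t \near c, w t <= w c).
Proof.
move=> d0 wsup wmax.
have : \forall t \near c, k * (t - c) + d * (t - c) ^+ 2 <= 0.
  by apply: filterS2 wsup wmax => t; lra.
move=> /nbhs_ballP[e /= e0]; rewrite ball_itv => He.
pose t := if 0 <= k then c + e / 2 else c - e / 2.
have [tI kt t2] : [/\ t \in `]c - e, c + e[%R, 0 <= k * (t - c) & (t - c) ^+ 2 = (e / 2) ^+ 2].
  rewrite /t in_itv /=; case: ifP => k0.
    have -> : c + e / 2 - c = e / 2 by ring.
    by split => //; [apply/andP; split; lra | rewrite mulr_ge0 // divr_ge0 // ltW].
  have -> : c - e / 2 - c = - (e / 2) by ring.
  move/negbT: k0; rewrite -ltNge => k0.
  by rewrite sqrrN; split => //; [apply/andP; split; lra | nra].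
have := He t tI; have : 0 < d * (t - c) ^+ 2 by rewrite t2 mulr_gt0 // exprn_gt0 // divr_gt0.
lra.
Qed.

(* The strictly convex perturbation d (t - x) (t - y) keeps the boundary values and
   turns the support line of h at an interior maximum into a contradiction. *)
Lemma support_line_le0 h x y : x < y -> continuous h -> h x = 0 -> h y = 0 ->
  (forall c, x < c < y -> has_support_line h c) ->
  forall z, x <= z <= y -> h z <= 0.
Proof.
move=> xy hc hx0 hy0 hs z /andP[xz zy]; rewrite leNgt; apply/negP => hz0.
pose d := h z / (2 * (y - x) ^+ 2).
have d0 : 0 < d by rewrite divr_gt0 // mulr_gt0 // exprn_gt0 // subr_gt0.
have dE : d * (2 * (y - x) ^+ 2) = h z.
  by rewrite divfK // mulf_neq0 // expf_neq0 // subr_eq0 gt_eqF.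
pose w := h + horner (d%:P * (('X - x%:P) * ('X - y%:P))).
have wE t : w t = h t + d * ((t - x) * (t - y)).
  by rewrite /w; congr (h t + _); rewrite !hornerE.
have wc : {within `[x, y], continuous w}.
  by apply: continuous_subspaceT => t; exact: continuousD (hc t) (@continuous_horner R _ t).
have [c /[!in_itv]/= /andP[xc cy] cmax] := EVT_max (ltW xy) wc.
have wzc : w z <= w c by apply: cmax; rewrite in_itv /=; apply/andP.
have wz : 0 < w z.
  have : d * ((z - x) * (y - z)) <= d * (y - x) ^+ 2 by rewrite ler_pM2l //; nra.
  by rewrite wE; nra.
have [xc' cy'] : x < c /\ c < y.
  split; rewrite lt_neqAle ?xc ?cy andbT; apply/eqP => ec; move: wzc.
  - by rewrite -ec (wE x) hx0 subrr mul0r mulr0 addr0; lra.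
  - by rewrite ec (wE y) hy0 subrr !mulr0 addr0; lra.
have [k hk] := hs c ltac:(lra).
apply: (@support_line_quad_not_max w c (k + d * (2 * c - x - y)) d d0).
  apply: filterS hk => t hkt.
  have : w t - (w c + (k + d * (2 * c - x - y)) * (t - c) + d * (t - c) ^+ 2) =
    h t - (h c + k * (t - c)) by rewrite !wE; ring.
  lra.
have : c \in `]x, y[%R by rewrite in_itv /=; apply/andP.
move=> /near_in_itvoo; apply: filterS => t; rewrite in_itv /= => /andP[xt ty].
by apply: cmax; rewrite in_itv /= !ltW.
Qed.

Lemma convex_on_support_line a b u : continuous u ->
  (forall c, a < c < b -> has_support_line u c) -> convex_on a b u.
Proof.
move=> uc us x y l /andP[ax xb] /andP[ay yb] /andP[l0 l1].
wlog xy : x y l ax xb ay yb l0 l1 / x < y => [convex_xy|].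
  have [lt_xy|lt_yx|<-] := ltgtP x y; first exact: convex_xy.
  - have := convex_xy y x (1 - l) ay yb ax xb ltac:(lra) ltac:(lra) lt_yx.
    have -> : (1 - (1 - l)) * y + (1 - l) * x = (1 - l) * x + l * y by ring.
    lra.
  - by rewrite -!mulrDl subrK !mul1r.
pose q := (u x)%:P + ((u y - u x) / (y - x))%:P * ('X - x%:P).
have qE t : q.[t] = u x + (u y - u x) / (y - x) * (t - x) by rewrite !hornerE.
have yx0 : y - x != 0 by rewrite subr_eq0 gt_eqF.
pose h t := u t - q.[t].
have hc : continuous h by move=> t; exact: continuousB (uc t) (@continuous_horner R q t).
have chordE : q.[(1 - l) * x + l * y] = (1 - l) * u x + l * u y.
  by rewrite qE; field.
rewrite -chordE -subr_le0; apply: (support_line_le0 xy hc).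
- by rewrite /h qE; ring.
- by rewrite /h qE divfK //; ring.
- move=> c /andP[xc cy]; have [k kc] := us c ltac:(lra).
  exists (k - (u y - u x) / (y - x)); apply: filterS kc => t; rewrite /h !qE; lra.
- by apply/andP; split; nra.
Qed.

End SecondDerivative.

Definition mxdot {R : pzRingType} {m n} (P L : 'M[R]_(m, n)) : R := \tr (P^T *m L).

Section FrobeniusPairing.
Context {R : realType} {m n : nat}.
Implicit Types P L : 'M[R]_(m, n).

Lemma mxdot_sum P L : mxdot P L = \sum_i \sum_j P i j * L i j.
Proof.
rewrite /mxdot /mxtrace exchange_big; apply: eq_bigr => j _.
by rewrite mxE; apply: eq_bigr => i _; rewrite mxE.
Qed.

Lemma mxdotC P L : mxdot P L = mxdot L P.
Proof. by rewrite /mxdot -mxtrace_tr trmx_mul trmxK. Qed.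

Lemma mxdotDr P L L' : mxdot P (L + L') = mxdot P L + mxdot P L'.
Proof. by rewrite /mxdot mulmxDr mxtraceD. Qed.

Lemma mxdotZr P L a : mxdot P (a *: L) = a * mxdot P L.
Proof. by rewrite /mxdot -scalemxAr mxtraceZ. Qed.

Lemma mxdotBr P L L' : mxdot P (L - L') = mxdot P L - mxdot P L'.
Proof. by rewrite mxdotDr -scaleN1r mxdotZr mulN1r. Qed.

Lemma mxdot_self_ge0 L : 0 <= mxdot L L.
Proof.
by rewrite mxdot_sum; apply: sumr_ge0 => i _; apply: sumr_ge0 => j _; rewrite -expr2 sqr_ge0.
Qed.

Lemma mxdot_trmx_mul_le k (P : 'M[R]_(m, k)) L : P^T *m P = 1%:M ->
  mxdot (P^T *m L) (P^T *m L) <= mxdot L L.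
Proof.
move=> PP; set C := P^T *m L.
have : 0 <= mxdot (L - P *m C) (L - P *m C) := mxdot_self_ge0 _.
have PCL : mxdot (P *m C) L = mxdot C C by rewrite /mxdot trmx_mul mulmxA.
have PCPC : mxdot (P *m C) (P *m C) = mxdot C C.
  by rewrite /mxdot trmx_mul -mulmxA [P^T *m _]mulmxA PP mul1mx.
rewrite mxdotBr ![mxdot (L - _) _]mxdotC !mxdotBr (mxdotC L) PCL PCPC.
by rewrite subrr subr0 subr_ge0.
Qed.

Lemma mxdot_le_frobenius P L : mxdot P P = 1 -> mxdot P L <= Num.sqrt (mxdot L L).
Proof.
move=> P1; set a := mxdot P L.
have : 0 <= mxdot (L - a *: P) (L - a *: P) := mxdot_self_ge0 _.
have -> : mxdot (L - a *: P) (L - a *: P) = mxdot L L - a ^+ 2.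
  rewrite mxdotBr mxdotZr ![mxdot (L - _) _]mxdotC !mxdotBr !mxdotZr.
  by rewrite P1 (mxdotC L P) -/a; ring.
rewrite subr_ge0 => a2; apply: le_trans (ler_norm a) _.
by rewrite -sqrtr_sqr ler_wsqrtr.
Qed.

End FrobeniusPairing.

Section PositiveSemidefinite.
Context {R : realType}.

Lemma sqr_cV_ge0 k (v : 'cV[R]_k) : 0 <= (v^T *m v) 0 0.
Proof. by rewrite mxE; apply: sumr_ge0 => i _; rewrite mxE -expr2 sqr_ge0. Qed.

Lemma psd_mx_scalar k (a : R) : 0 <= a -> psd_mx (a%:M : 'M[R]_k).
Proof.
move=> a0; split; first exact: tr_scalar_mx.
by move=> v; rewrite mul_mx_scalar -scalemxAl mxE mulr_ge0 // sqr_cV_ge0.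
Qed.

Lemma psd_mxD k (A B : 'M[R]_k) : psd_mx A -> psd_mx B -> psd_mx (A + B).
Proof.
move=> [At Aq] [Bt Bq]; split; first by rewrite linearD /= At Bt.
by move=> v; rewrite mulmxDr mulmxDl mxE addr_ge0.
Qed.

Lemma psd_mxZ k (a : R) (A : 'M[R]_k) : 0 <= a -> psd_mx A -> psd_mx (a *: A).
Proof.
move=> a0 [At Aq]; split; first by rewrite linearZ /= At.
by move=> v; rewrite -scalemxAr -scalemxAl mxE mulr_ge0.
Qed.

Lemma psd_mx_congruence k l (L : 'M[R]_(k, l)) (A : 'M[R]_k) :
  psd_mx A -> psd_mx (L^T *m A *m L).
Proof.
move=> [At Aq]; split; first by rewrite !trmx_mul trmxK At mulmxA.
by move=> v; rewrite !mulmxA -trmx_mul -!mulmxA mulmxA; exact: Aq.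
Qed.

Lemma psd_mx_gram k l (L : 'M[R]_(k, l)) : psd_mx (L^T *m L).
Proof.
by have := psd_mx_congruence L (psd_mx_scalar k ler01); rewrite mulmx1.
Qed.

Lemma sqr_cV_eq0 k (w : 'cV[R]_k) : (w^T *m w) 0 0 = 0 -> w = 0.
Proof.
have sq i : w^T 0 i * w i 0 = w i 0 ^+ 2 by rewrite mxE expr2.
rewrite mxE (eq_bigr _ (fun i _ => sq i)) => /eqP.
rewrite psumr_eq0 => [/allP w0|i _]; last exact: sqr_ge0.
apply/matrixP => i j; rewrite ord1 mxE; apply/eqP; rewrite -sqrf_eq0.
by have /implyP := w0 i (mem_index_enum _); apply.
Qed.

(* q(v - t A v) = q(v) - 2 t |A v|^2 + t^2 q(A v) cannot stay >= 0 for small t > 0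
   unless A v = 0. *)
Lemma psd_quad_eq0 k (A : 'M[R]_k) (v : 'cV[R]_k) :
  psd_mx A -> (v^T *m A *m v) 0 0 = 0 -> A *m v = 0.
Proof.
move=> [At Aq] qv0; set w := A *m v; apply: sqr_cV_eq0.
have expand t : ((v - t *: w)^T *m A *m (v - t *: w)) 0 0 =
    (v^T *m A *m v) 0 0 - 2 * t * (w^T *m w) 0 0 + t ^+ 2 * (w^T *m A *m w) 0 0.
  have vAw : v^T *m A *m w = w^T *m w by rewrite /w trmx_mul At mulmxA.
  have wAv : w^T *m A *m v = w^T *m w by rewrite -mulmxA.
  have -> : (v - t *: w)^T = v^T - t *: w^T by rewrite linearB linearZ.
  by rewrite mulmxBl mulmxBr !mulmxBl -!scalemxAl -!scalemxAr vAw wAv !mxE; ring.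
set N := (w^T *m w) 0 0; set Q := (w^T *m A *m w) 0 0.
have Q0 : 0 <= Q := Aq w.
pose t := N / (Q + 1).
have tE : N = t * (Q + 1) by rewrite divfK // gt_eqF // ltr_wpDl.
have := Aq (v - t *: w); rewrite expand qv0 -/N -/Q {1}tE => qt.
have t2 : t ^+ 2 * (Q + 2) <= 0 by lra.
have /eqP : t ^+ 2 = 0.
  by apply/eqP; rewrite eq_le sqr_ge0 andbT -(pmulr_lle0 _ (_ : 0 < Q + 2)) //; lra.
by rewrite sqrf_eq0 tE => /eqP ->; rewrite mul0r.
Qed.

Lemma quad_delta_mx k (B : 'M[R]_k) i :
  ((delta_mx i 0 : 'cV[R]_k)^T *m B *m (delta_mx i 0 : 'cV[R]_k)) 0 0 = B i i.
Proof. by rewrite trmx_delta -rowE -colE !mxE. Qed.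

Lemma psd_mxtrace_ge0 k (B : 'M[R]_k) : psd_mx B -> 0 <= \tr B.
Proof. by move=> [_ Bq]; apply: sumr_ge0 => i _; rewrite -quad_delta_mx. Qed.

Lemma mxdot_mul_psd_ge0 k l (L : 'M[R]_(k, l)) (A : 'M[R]_k) : psd_mx A -> 0 <= mxdot L (A *m L).
Proof. by move=> psdA; rewrite /mxdot mulmxA; exact/psd_mxtrace_ge0/psd_mx_congruence. Qed.

Lemma mxdot_mul_psd_gt0 k l (L : 'M[R]_(k, l)) (A : 'M[R]_k) : psd_mx A -> A *m L != 0 ->
  0 < mxdot L (A *m L).
Proof.
move=> psdA; apply: contraNT; rewrite -leNgt => le0.
have /eqP : mxdot L (A *m L) = 0 by apply/eqP; rewrite eq_le le0 mxdot_mul_psd_ge0.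
have quadE j : (L^T *m (A *m L)) j j = ((col j L)^T *m A *m col j L) 0 0.
  by rewrite -quad_delta_mx colE trmx_mul !mulmxA.
rewrite /mxdot /mxtrace psumr_eq0 => [/allP col0|j _]; last first.
  by rewrite quadE; case: psdA => _; apply.
apply/eqP/matrixP => i j; rewrite mxE.
have /implyP/(_ isT)/eqP := col0 j (mem_index_enum _).
rewrite quadE => /(psd_quad_eq0 psdA) /(congr1 (fun v : 'cV_k => v i 0)).
have -> : A *m col j L = col j (A *m L) by rewrite !colE mulmxA.
by rewrite !mxE.
Qed.

End PositiveSemidefinite.

Section TwoByTwo.
Context {R : realType}.
Implicit Types M S X Y : 'M[R]_2.

Lemma ord2P (i : 'I_2) : i = 0 \/ i = 1.
Proof. by case: i => -[|[|//]] i2; [left | right]; apply: val_inj. Qed.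

Lemma det_mx2 M : \det M = M 0 0 * M 1 1 - M 0 1 * M 1 0.
Proof.
rewrite (expand_det_row _ 0) !big_ord_recl big_ord0 addr0 /cofactor !det_mx11 !mxE /=.
rewrite expr0 mul1r /bump /= expr1 mulN1r mulrN.
by congr (M _ _ * M _ _ - M _ _ * M _ _); apply: val_inj.
Qed.

Lemma mxtrace_mx2 M : \tr M = M 0 0 + M 1 1.
Proof.
rewrite /mxtrace !big_ord_recl big_ord0 addr0.
by congr (M _ _ + M _ _); apply: val_inj.
Qed.

Lemma mulmx2E m n (M : 'M[R]_(m, 2)) (N : 'M[R]_(2, n)) i j :
  (M *m N) i j = M i 0 * N 0 j + M i 1 * N 1 j.
Proof.
rewrite mxE !big_ord_recl big_ord0 addr0.
by congr (M _ _ * N _ _ + M _ _ * N _ _); apply: val_inj.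
Qed.

Lemma quad_mx2 S (v : 'cV[R]_2) : (v^T *m S *m v) 0 0 =
  S 0 0 * v 0 0 ^+ 2 + (S 0 1 + S 1 0) * v 0 0 * v 1 0 + S 1 1 * v 1 0 ^+ 2.
Proof. by rewrite !mulmx2E !mxE; ring. Qed.

Lemma mxtrace_sqr_mx2 M : \tr (M *m M) = \tr M ^+ 2 - 2 * \det M.
Proof. by rewrite !mxtrace_mx2 det_mx2 !mulmx2E; ring. Qed.

Lemma psd_mx2P S : psd_mx S ->
  [/\ S 1 0 = S 0 1, 0 <= S 0 0, 0 <= S 1 1 & S 0 1 ^+ 2 <= S 0 0 * S 1 1].
Proof.
move=> [St Sq]; have S10 : S 1 0 = S 0 1 by rewrite -[in LHS]St mxE.
have Q p q : 0 <= S 0 0 * p ^+ 2 + 2 * S 0 1 * p * q + S 1 1 * q ^+ 2.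
  have := Sq (\col_i (if i == 0 then p else q)); rewrite quad_mx2 !mxE /= S10.
  by congr (0 <= _ + _ + _); ring.
have a0 : 0 <= S 0 0 by have := Q 1 0; rewrite expr1n expr0n /=; lra.
have c0 : 0 <= S 1 1 by have := Q 0 1; rewrite expr1n expr0n /=; lra.
split => //; set a := S 0 0 in a0 Q *; set b := S 0 1 in Q *; set c := S 1 1 in c0 Q *.
have Q1 : 0 <= a * (a * c - b ^+ 2) by have := Q b (- a); congr (0 <= _); ring.
have Q2 : 0 <= c * (a * c - b ^+ 2) by have := Q c (- b); congr (0 <= _); ring.
have Q3 := Q 1 (- b).
rewrite -subr_ge0; have [a_gt0|] := ltP 0 a; first by rewrite -(pmulr_rge0 _ a_gt0).
have [c_gt0 _|c_le0 a_le0] := ltP 0 c; first by rewrite -(pmulr_rge0 _ c_gt0).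
have [-> ->] : a = 0 /\ c = 0 by split; lra.
move: Q3; rewrite expr1n; nra.
Qed.

Lemma psd_mx2_det_ge0 S : psd_mx S -> 0 <= \det S.
Proof. by case/psd_mx2P => S10 _ _ Sdet; rewrite det_mx2 S10 -expr2 subr_ge0. Qed.

Lemma mxtrace_psd_mx2 S : psd_mx S ->
  \tr S = Num.sqrt (\tr (S *m S) + 2 * Num.sqrt (\det (S *m S))).
Proof.
move=> psdS; have [_ S00 S11 _] := psd_mx2P psdS.
rewrite det_mulmx -expr2 sqrtr_sqr ger0_norm ?psd_mx2_det_ge0 //.
rewrite mxtrace_sqr_mx2 subrK sqrtr_sqr ger0_norm // mxtrace_mx2 addr_ge0 //.
Qed.

(* Cayley-Hamilton gives (M + g)^2 = (tr M + 2 g) M for g = sqrt (det M). *)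
Lemma psd_mx2_sqrt M : psd_mx M -> exists2 S, psd_mx S & S *m S = M.
Proof.
move=> psdM; have [M10 M00 M11 Mdet] := psd_mx2P psdM.
set g := Num.sqrt (\det M); set nu := Num.sqrt (\tr M + 2 * g).
have g0 : 0 <= g := sqrtr_ge0 _.
have g2 : g ^+ 2 = M 0 0 * M 1 1 - M 0 1 ^+ 2.
  by rewrite sqr_sqrtr ?psd_mx2_det_ge0 // det_mx2 M10 expr2.
have nu2 : nu ^+ 2 = M 0 0 + M 1 1 + 2 * g.
  by rewrite sqr_sqrtr mxtrace_mx2 // !addr_ge0 // mulr_ge0.
exists (nu^-1 *: (M + g%:M)).
  by apply: psd_mxZ; [rewrite invr_ge0 sqrtr_ge0 | exact/psd_mxD/psd_mx_scalar].
have key : (M + g%:M) *m (M + g%:M) = nu ^+ 2 *: M.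
  apply/matrixP => i j; rewrite mulmx2E !mxE nu2.
  by case: (ord2P i) => ->; case: (ord2P j) => -> /=; rewrite ?M10 /=; lra.
rewrite -scalemxAl -scalemxAr key !scalerA.
have [nu0|nu_neq0] := eqVneq nu 0; last by rewrite [X in X *: M](_ : _ = 1) ?scale1r //; field.
have [a0 c0] : M 0 0 = 0 /\ M 1 1 = 0 by move: nu2; rewrite nu0 expr0n /=; split; lra.
have b0 : M 0 1 = 0 by apply/eqP; rewrite -sqrf_eq0 eq_le sqr_ge0 andbT; rewrite a0 mul0r in Mdet.
rewrite nu0 invr0 !mul0r scale0r; apply/matrixP => i j; rewrite mxE.
by case: (ord2P i) => ->; case: (ord2P j) => ->; rewrite ?M10.
Qed.

Lemma sqrt_mx2P M : psd_mx M -> psd_mx (sqrt_mx M) /\ sqrt_mx M *m sqrt_mx M = M.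
Proof.
move=> /psd_mx2_sqrt[S psdS SS]; rewrite /sqrt_mx.
by case: (xgetPex 0 (ex_intro (fun S => psd_mx S /\ S *m S = M) S (conj psdS SS))).
Qed.

Lemma mxtrace_sqrt_mx2 M : psd_mx M ->
  \tr (sqrt_mx M) = Num.sqrt (\tr M + 2 * Num.sqrt (\det M)).
Proof. by case/sqrt_mx2P => psdS SS; rewrite mxtrace_psd_mx2 // SS. Qed.

Lemma det_sqrt_mx2 M : psd_mx M -> \det (sqrt_mx M) = Num.sqrt (\det M).
Proof.
case/sqrt_mx2P => psdS SS; rewrite -[in RHS]SS det_mulmx -expr2 sqrtr_sqr.
by rewrite ger0_norm // psd_mx2_det_ge0.
Qed.

Lemma mxtrace_mul_psd_mx2 X Y : psd_mx X -> psd_mx Y ->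
  0 <= \tr (X *m Y) /\ (0 < \det X -> 0 < \tr Y -> 0 < \tr (X *m Y)).
Proof.
move=> psdX psdY; have [[St _] SS] := sqrt_mx2P psdX; set S := sqrt_mx X in St SS.
have -> : \tr (X *m Y) = mxdot S (Y *m S) by rewrite -SS -mulmxA mxtrace_mulC /mxdot St mulmxA.
split => [|detX trY]; first exact: mxdot_mul_psd_ge0.
apply: mxdot_mul_psd_gt0 => //; apply: contraTneq trY => YS0.
have Sunit : S \in unitmx.
  by rewrite unitmxE unitfE /S det_sqrt_mx2 // gt_eqF // sqrtr_gt0.
by rewrite -[Y](mulmxK Sunit) YS0 mul0mx linear0 ltxx.
Qed.

Lemma sqr_mxtrace_mx2_le M : \tr M ^+ 2 <= mxdot M M + 2 * \det M.
Proof.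
rewrite /mxdot !mxtrace_mx2 det_mx2 !mulmx2E !mxE -subr_ge0.
have -> : M 0 0 * M 0 0 + M 1 0 * M 1 0 + (M 0 1 * M 0 1 + M 1 1 * M 1 1) +
    2 * (M 0 0 * M 1 1 - M 0 1 * M 1 0) - (M 0 0 + M 1 1) ^+ 2 = (M 0 1 - M 1 0) ^+ 2.
  by ring.
exact: sqr_ge0.
Qed.

End TwoByTwo.

Section NuclearNorm.
Context {R : realType} {m : nat}.
Implicit Types (L : 'M[R]_(m, 2)) (A : 'M[R]_m).

Lemma schatten1_gramE L :
  schatten1 L = Num.sqrt (mxdot L L + 2 * Num.sqrt (\det (L^T *m L))).
Proof. exact: mxtrace_sqrt_mx2 (psd_mx_gram L). Qed.

Lemma frobenius_le_schatten1 L : Num.sqrt (mxdot L L) <= schatten1 L.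
Proof. by rewrite schatten1_gramE ler_wsqrtr // lerDl mulr_ge0 ?sqrtr_ge0. Qed.

Lemma schatten1_frobenius L : \det (L^T *m L) = 0 -> schatten1 L = Num.sqrt (mxdot L L).
Proof. by move=> det0; rewrite schatten1_gramE det0 sqrtr0 mulr0 addr0. Qed.

Lemma rank2_det_gram_gt0 L : \rank L = 2%N -> 0 < \det (L^T *m L).
Proof.
move=> rkL; have /row_fullP[B BL] : row_full L by rewrite /row_full rkL.
have := psd_mx2_det_ge0 (psd_mx_gram L); rewrite le_eqVlt => /orP[/eqP det0|//].
have /det0P[v v0] : \det (L^T *m L) == 0 by rewrite -det0.
rewrite mulmxA => vLL; have Lv0 : L *m v^T = 0.
  have := @psd_quad_eq0 _ _ 1%:M (L *m v^T) (psd_mx_scalar _ ler01).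
  rewrite mul1mx; apply.
  by rewrite mulmx1 trmx_mul trmxK mulmxA vLL mul0mx mxE.
move/eqP: v0; case; apply: trmx_inj.
by rewrite trmx0 -[v^T]mul1mx -BL -mulmxA Lv0 mulmx0.
Qed.

Definition polar L := L *m invmx (sqrt_mx (L^T *m L)).

Section Polar.
Variable L : 'M[R]_(m, 2).
Hypothesis det_gt0 : 0 < \det (L^T *m L).

Let S := sqrt_mx (L^T *m L).
Let psdS : psd_mx S := (sqrt_mx2P (psd_mx_gram L)).1.
Let SS : S *m S = L^T *m L := (sqrt_mx2P (psd_mx_gram L)).2.

Let S_unit : S \in unitmx.
Proof. by rewrite unitmxE unitfE /S (det_sqrt_mx2 (psd_mx_gram L)) gt_eqF // sqrtr_gt0. Qed.

Let trSV : (invmx S)^T = invmx S.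
Proof. by rewrite trmx_inv psdS.1. Qed.

Lemma polar_orthonormal : (polar L)^T *m polar L = 1%:M.
Proof.
rewrite /polar -/S trmx_mul trSV mulmxA -[_ *m L^T *m L]mulmxA -SS.
by rewrite mulmxA mulVmx // mul1mx mulmxV.
Qed.

Lemma mxdot_polar : mxdot (polar L) L = schatten1 L.
Proof. by rewrite /mxdot /polar -/S trmx_mul trSV -mulmxA -SS mulmxA mulVmx // mul1mx. Qed.

Lemma mxdot_polar_mul_psd A : psd_mx A ->
  0 <= mxdot (polar L) (A *m L) /\ (A *m L != 0 -> 0 < mxdot (polar L) (A *m L)).
Proof.
move=> psdA.
have -> : mxdot (polar L) (A *m L) = \tr (invmx S *m (L^T *m A *m L)).
  by rewrite /mxdot /polar -/S trmx_mul trSV !mulmxA.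
have psdSV : psd_mx (invmx S).
  have := psd_mx_congruence (invmx S) psdS.
  by rewrite trSV mulVmx // mul1mx.
have [ge0 gt0] := mxtrace_mul_psd_mx2 psdSV (psd_mx_congruence L psdA).
split=> // AL0; apply: gt0.
  by rewrite det_inv invr_gt0 /S (det_sqrt_mx2 (psd_mx_gram L)) sqrtr_gt0.
by rewrite -mulmxA; exact: mxdot_mul_psd_gt0.
Qed.

End Polar.

End NuclearNorm.

Section ThreeByTwo.
Context {R : realType}.
Implicit Types P L : 'M[R]_(3, 2).

Lemma mulmx3E m n (M : 'M[R]_(m, 3)) (N : 'M[R]_(3, n)) i j :
  (M *m N) i j = M i 0 * N 0 j + M i 1 * N 1 j + M i 2 * N 2 j.
Proof.
rewrite mxE !big_ord_recl big_ord0 addr0 addrA.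
by congr (M _ _ * N _ _ + M _ _ * N _ _ + M _ _ * N _ _); apply: val_inj.
Qed.

(* Binet-Cauchy: det (P^T L) = n . w with n = q /\ r and w = x /\ y for the columns
   q, r of P and x, y of L, and |n| = 1 since P has orthonormal columns. *)
Lemma sqr_det_trmx_mul_le P L : P^T *m P = 1%:M ->
  \det (P^T *m L) ^+ 2 <= \det (L^T *m L).
Proof.
move=> PP; have entry i j := congr1 (fun M : 'M[R]_2 => M i j) PP.
move: (entry 0 0) (entry 1 1) (entry 0 1); rewrite !mulmx3E !mxE /= => qq rr qr.
rewrite !det_mx2 !mulmx3E !mxE -subr_ge0.
set q0 := P 0 0 in qq qr *; set q1 := P 1 0 in qq qr *; set q2 := P 2 0 in qq qr *.
set r0 := P 0 1 in rr qr *; set r1 := P 1 1 in rr qr *; set r2 := P 2 1 in rr qr *.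
set x0 := L 0 0; set x1 := L 1 0; set x2 := L 2 0.
set y0 := L 0 1; set y1 := L 1 1; set y2 := L 2 1.
pose n0 := q1 * r2 - q2 * r1; pose n1 := q2 * r0 - q0 * r2; pose n2 := q0 * r1 - q1 * r0.
pose w0 := x1 * y2 - x2 * y1; pose w1 := x2 * y0 - x0 * y2; pose w2 := x0 * y1 - x1 * y0.
set D := (X in 0 <= X).
have -> : D = (n1 * w2 - n2 * w1) ^+ 2 + (n2 * w0 - n0 * w2) ^+ 2 + (n0 * w1 - n1 * w0) ^+ 2 +
    (w0 ^+ 2 + w1 ^+ 2 + w2 ^+ 2) * (1 - ((q0 * q0 + q1 * q1 + q2 * q2) *
      (r0 * r0 + r1 * r1 + r2 * r2) - (q0 * r0 + q1 * r1 + q2 * r2) ^+ 2)).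
  by rewrite /D /n0 /n1 /n2 /w0 /w1 /w2; ring.
rewrite qq rr qr expr0n mulr1 subr0 subrr mulr0 addr0.
by rewrite !addr_ge0 ?sqr_ge0.
Qed.

Lemma mxdot_le_schatten1 P L : P^T *m P = 1%:M -> mxdot P L <= schatten1 L.
Proof.
move=> PP; set C := P^T *m L.
have trC : mxdot P L = \tr C by [].
have detC : \det C <= Num.sqrt (\det (L^T *m L)).
  by rewrite (le_trans (ler_norm _)) // -sqrtr_sqr ler_wsqrtr // sqr_det_trmx_mul_le.
rewrite trC schatten1_gramE (le_trans (ler_norm _)) // -sqrtr_sqr ler_wsqrtr //.
rewrite (le_trans (sqr_mxtrace_mx2_le C)) // lerD ?ler_pM2l //.
exact: mxdot_trmx_mul_le.
Qed.

End ThreeByTwo.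

Section MatrixPaths.
Context {R : realType} {m n : nat}.
Implicit Types (T : R -> 'M[R]_(m, n)) (P : 'M[R]_(m, n)).

Definition mxderive T (s : R) : 'M[R]_(m, n) := \matrix_(i, j) derive1 (fun r => T r i j) s.

Lemma is_derive_mxdot P T x : (forall i j, derivable (fun s => T s i j) x 1) ->
  is_derive x 1 (fun s => mxdot P (T s)) (mxdot P (mxderive T x)).
Proof.
move=> dT.
have -> : (fun s => mxdot P (T s)) = \sum_i \sum_j (fun s => P i j * T s i j).
  apply/funext => s; rewrite mxdot_sum fct_sumE; apply: eq_bigr => i _.
  by rewrite fct_sumE.
rewrite mxdot_sum; apply: is_derive_sum => i; apply: is_derive_sum => j.
rewrite mxE; have := is_derive1M (is_derive_cst (P i j) x 1) (is_derive1_derive1 (dT i j)).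
by rewrite mul0r add0r.
Qed.

Lemma derive2_mxdot P T t : (forall i j, smooth_fun (fun s => T s i j)) ->
  derivable2 (fun s => mxdot P (T s)) t /\
  derive1 (derive1 (fun s => mxdot P (T s))) t = mxdot P (mxderive (mxderive T) t).
Proof.
move=> sT; apply: derivable2_near_derive.
  by apply: filterE => x; apply: is_derive_mxdot => i j; exact: (sT i j 0%N).
apply: is_derive_mxdot => i j.
have -> : (fun s => mxderive T s i j) = derive1 (fun s => T s i j).
  by apply/funext => s; rewrite mxE.
exact: (sT i j 1%N).
Qed.

Lemma mxdot_derive2_le (f : 'M[R]_(m, n) -> R) P T t :
  (forall i j, smooth_fun (fun s => T s i j)) -> derivable2 (fun s => f (T s)) t ->
  (forall L, mxdot P L <= f L) -> mxdot P (T t) = f (T t) ->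
  mxdot P (mxderive (mxderive T) t) <= derive1 (derive1 (fun s => f (T s))) t.
Proof.
move=> sT df Pf Pft; have [dP <-] := derive2_mxdot P t sT.
by apply: (derive2_le_contact df dP) => //; apply: filterE.
Qed.

Lemma derivable2_gram T t : (forall i j, derivable2 (fun s => T s i j) t) ->
  forall i j, derivable2 (fun s => ((T s)^T *m T s) i j) t.
Proof.
move=> dT i j.
have -> : (fun s => ((T s)^T *m T s) i j) = (fun s => \sum_k T s k i * T s k j).
  by apply/funext => s; rewrite mxE; apply: eq_bigr => k _; rewrite mxE.
by apply: derivable2_sum => k; exact: derivable2M.
Qed.

End MatrixPaths.

Section GramPath.
Context {R : realType} {m : nat} (T : R -> 'M[R]_(m, 2)).
Hypothesis smoothT : forall i j, smooth_fun (fun s => T s i j).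
Arguments smoothT : clear implicits.

Let derivable2_gramT (t : R) :=
  derivable2_gram (fun i j => smooth_derivable2 (smoothT i j) t).

Lemma derivable2_mxdot_self_path t : derivable2 (fun s => mxdot (T s) (T s)) t.
Proof.
have -> : (fun s => mxdot (T s) (T s)) =
    (fun s => ((T s)^T *m T s) 0 0 + ((T s)^T *m T s) 1 1).
  by apply/funext => s; rewrite /mxdot mxtrace_mx2.
exact: derivable2D.
Qed.

Lemma derivable2_det_gram_path t : derivable2 (fun s => \det ((T s)^T *m T s)) t.
Proof.
have -> : (fun s => \det ((T s)^T *m T s)) = (fun s =>
    ((T s)^T *m T s) 0 0 * ((T s)^T *m T s) 1 1 - ((T s)^T *m T s) 0 1 * ((T s)^T *m T s) 1 0).
  by apply/funext => s; rewrite det_mx2.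
by have [] := derive2B (derivable2M (derivable2_gramT t 0 0) (derivable2_gramT t 1 1))
                       (derivable2M (derivable2_gramT t 0 1) (derivable2_gramT t 1 0)).
Qed.

Let schatten1_pathE : (fun s => schatten1 (T s)) =
    (fun s => Num.sqrt (mxdot (T s) (T s) + 2 * Num.sqrt (\det ((T s)^T *m T s)))).
Proof. by apply/funext => s; exact: schatten1_gramE. Qed.

Lemma derivable2_frobenius_path t : 0 < mxdot (T t) (T t) ->
  derivable2 (fun s => Num.sqrt (mxdot (T s) (T s))) t.
Proof. exact: derivable2_sqrt (derivable2_mxdot_self_path t). Qed.

Lemma derivable2_schatten1_path t : 0 < \det ((T t)^T *m T t) ->
  derivable2 (fun s => schatten1 (T s)) t.
Proof.
move=> det_gt0; rewrite schatten1_pathE.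
apply: derivable2_sqrt; last by rewrite ltr_wpDl ?mxdot_self_ge0 // mulr_gt0 // sqrtr_gt0.
apply: derivable2D (derivable2_mxdot_self_path t) (derivable2M (derivable2_cst 2 t) _).
exact: derivable2_sqrt (derivable2_det_gram_path t) det_gt0.
Qed.

Lemma continuous_schatten1_path : continuous (fun s => schatten1 (T s)).
Proof.
rewrite schatten1_pathE => t.
apply: continuous_comp; last exact: sqrt_continuous.
apply: continuousD; first exact/derivable2_continuous/derivable2_mxdot_self_path.
apply: continuousM; first exact: cst_continuous.
apply: continuous_comp; last exact: sqrt_continuous.
exact/derivable2_continuous/derivable2_det_gram_path.
Qed.

End GramPath.

Section SchattenPath.
Context {R : realType} (A : R -> 'M[R]_3) (T : R -> 'M[R]_(3, 2)).
Hypothesis smoothT : forall i j, smooth_fun (fun s => T s i j).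
Arguments smoothT : clear implicits.
Hypothesis psdA : forall s, 0 <= s <= 1 -> psd_mx (A s).
Hypothesis odeT : forall s, 0 <= s <= 1 -> mxderive (mxderive T) s = A s *m T s.

Lemma derive2_schatten1_path_ge t : 0 <= t <= 1 -> 0 < \det ((T t)^T *m T t) ->
  mxdot (polar (T t)) (A t *m T t) <= derive1 (derive1 (fun s => schatten1 (T s))) t.
Proof.
move=> t01 det_gt0; rewrite -odeT //.
apply: (mxdot_derive2_le (f := @schatten1 R 3 2) smoothT
  (derivable2_schatten1_path smoothT det_gt0) _ (mxdot_polar det_gt0)).
by move=> L; apply: mxdot_le_schatten1; exact: polar_orthonormal.
Qed.

Lemma derive2_frobenius_path_ge0 t : 0 <= t <= 1 -> 0 < mxdot (T t) (T t) ->
  0 <= derive1 (derive1 (fun s => Num.sqrt (mxdot (T s) (T s)))) t.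
Proof.
move=> t01 N_gt0; set F := Num.sqrt (mxdot (T t) (T t)); set P := F^-1 *: T t.
have F_neq0 : F != 0 by rewrite gt_eqF // sqrtr_gt0.
have F2 : F ^+ 2 = mxdot (T t) (T t) by rewrite sqr_sqrtr // ltW.
have PL L : mxdot P L = F^-1 * mxdot (T t) L.
  by rewrite /P [LHS]mxdotC mxdotZr mxdotC.
have PP : mxdot P P = 1 by rewrite PL mxdotZr -F2; field.
have PT : mxdot P (T t) = F by rewrite PL -F2; field.
apply: (@le_trans _ _ (mxdot P (A t *m T t))).
  rewrite PL mulr_ge0 ?invr_ge0 ?sqrtr_ge0 //; exact: mxdot_mul_psd_ge0 (psdA t01).
rewrite -odeT //.
apply: (mxdot_derive2_le (f := fun L => Num.sqrt (mxdot L L)) smoothT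
  (derivable2_frobenius_path smoothT N_gt0) _ PT).
by move=> L; exact: mxdot_le_frobenius.
Qed.

Lemma schatten1_path_support_line c : 0 < c < 1 ->
  has_support_line (fun s => schatten1 (T s)) c.
Proof.
move=> c01; have near01 : \forall t \near c, 0 <= t <= 1.
  have : c \in `]0, 1[%R by rewrite in_itv.
  move=> /near_in_itvoo; apply: filterS => t; rewrite in_itv /= => /andP[t0 t1].
  by rewrite !ltW.
have [det_gt0|] := ltP 0 (\det ((T c)^T *m T c)).
  apply: support_line_derive2_ge0.
  have /cvgr_gt/(_ _ det_gt0) := derivable2_continuous (derivable2_det_gram_path smoothT c).
  apply: filterS2 near01 => t t01 dett; split; first exact: derivable2_schatten1_path.
  apply: le_trans (derive2_schatten1_path_ge t01 dett).
  exact: (mxdot_polar_mul_psd dett (psdA t01)).1.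
move=> det_le0; have det0 : \det ((T c)^T *m T c) = 0.
  by apply/eqP; rewrite eq_le det_le0 psd_mx2_det_ge0 //; exact: psd_mx_gram.
apply: (has_support_line_le (f := fun s => Num.sqrt (mxdot (T s) (T s)))).
- by move=> t; exact: frobenius_le_schatten1.
- by rewrite schatten1_frobenius.
have [N_gt0|] := ltP 0 (mxdot (T c) (T c)).
  apply: support_line_derive2_ge0.
  have /cvgr_gt/(_ _ N_gt0) := derivable2_continuous (derivable2_mxdot_self_path smoothT c).
  apply: filterS2 near01 => t t01 Nt.
  by split; [exact: derivable2_frobenius_path | exact: derive2_frobenius_path_ge0].
move=> N_le0; have N0 : mxdot (T c) (T c) = 0.
  by apply/eqP; rewrite eq_le N_le0 mxdot_self_ge0.
by exists 0; apply: filterE => t; rewrite N0 sqrtr0 mul0r addr0 sqrtr_ge0.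
Qed.

Lemma derive2_schatten1_path_gt0 s : 0 <= s <= 1 -> \rank (T s) = 2%N ->
  A s *m T s != 0 ->
  derivable2 (fun r => schatten1 (T r)) s /\
  0 < derive1 (derive1 (fun r => schatten1 (T r))) s.
Proof.
move=> s01 rk2 AT0; have det_gt0 := rank2_det_gram_gt0 rk2.
split; first exact: derivable2_schatten1_path.
apply: lt_le_trans (derive2_schatten1_path_ge s01 det_gt0).
exact: (mxdot_polar_mul_psd det_gt0 (psdA s01)).2.
Qed.

End SchattenPath.

Theorem propositionA3 (R : realType)
  (A : R -> 'M[R]_3) (T : R -> 'M[R]_(3, 2))
  (hAsmooth : forall i j, smooth_fun (fun s => A s i j))
  (hTsmooth : forall i j, smooth_fun (fun s => T s i j))
  (hApos : forall s, 0 <= s <= 1 -> psd_mx (A s))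
  (hode : forall s, 0 <= s <= 1 -> forall i j,
     derive1 (derive1 (fun t => T t i j)) s = (A s *m T s) i j) :
  convex_on 0 1 (fun s => schatten1 (T s)) /\
  (forall s, 0 <= s <= 1 -> \rank (T s) = 2%N -> A s *m T s != 0 ->
     (\forall t \near s, derivable (fun r => schatten1 (T r)) t 1) /\
     derivable (derive1 (fun r => schatten1 (T r))) s 1 /\
     0 < derive1 (derive1 (fun r => schatten1 (T r))) s).
Proof.
have odeT s : 0 <= s <= 1 -> mxderive (mxderive T) s = A s *m T s.
  move=> s01; apply/matrixP => i j; rewrite -hode // mxE.
  by congr (derive1 _ s); apply/funext => r; rewrite mxE.
split.
  apply: convex_on_support_line; first exact: continuous_schatten1_path hTsmooth.
  exact: (schatten1_path_support_line hTsmooth hApos odeT).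
move=> s s01 rk2 AT0.
by have [[]] := derive2_schatten1_path_gt0 hTsmooth hApos odeT s01 rk2 AT0.
Qed.
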